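(* Let $\mathcal P_{XY}$ be any distribution on $\mathbb R^p\times\mathbb R$ and let $Z_i=(X_i,Y_i)$, $i=1,\dots,n+1$, be i.i.d. draws from $\mathcal P_{XY}$. Let $\mathcal Z=\{Z_1,\dots,Z_{n+1}\}$ and $\mathcal X=\{X_1,\dots,X_{n+1}\}$ denote the unordered sets of observations and of features. Let $V(z)=V(z;\mathcal Z)$ be a real-valued score function whose form may depend on the data only through $\mathcal Z$, and set $V_i=V(Z_i;\mathcal Z)$. Let $H:\mathbb R^p\times\mathbb R^p\to[0,1]$ be a localizer function whose form may depend on the data only through $\mathcal X$, with $H(x,x)=1$ for all $x$. Put $H_{ij}=H(X_i,X_j)$ and $p^H_{ij}=H_{ij}/\sum_{k=1}^{n+1}H_{ik}$, and define the weighted distributions $$\hat{\mathcal F}_i=\sum_{j=1}^{n+1}p^H_{ij}\delta_{V_j}\quad(i=1,\dots,n+1),\qquad \hat{\mathcal F}=\sum_{j=1}^{n}p^H_{n+1,j}\delta_{V_j}+p^H_{n+1,n+1}\delta_{+\infty}.$$ Let $\Gamma=\{\sum_{k\in I}p^H_{ik}: i\in\{1,\dots,n+1\},\ I\subseteq\{1,\dots,n+1\}\}$ and fix $\alpha\in(0,1)$. Let $\tilde\alpha$ be the smallest value in $\Gamma$ such that $$\frac{1}{n+1}\sum_{i=1}^{n+1}\mathbb 1\{V_i\le Q(\tilde\alpha;\hat{\mathcal F}_i)\}\ge\alpha.$$ Then $\mathbb P\{V_{n+1}\le Q(\tilde\alpha;\hat{\mathcal F}_{n+1})\}\ge\alpha$,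 and equivalently $\mathbb P\{V_{n+1}\le Q(\tilde\alpha;\hat{\mathcal F})\}\ge\alpha$.
   Context: For a distribution $\mathcal F$ on $\mathbb R\cup\{+\infty\}$, $Q(\alpha;\mathcal F)=\inf\{t:\mathbb P_{T\sim\mathcal F}(T\le t)\ge\alpha\}$ is its level-$\alpha$ quantile. $\delta_v$ is the point mass at $v$. All scores $V_i$ (and hence $\hat{\mathcal F}_i,\hat{\mathcal F},\tilde\alpha$) may depend on $Y_{n+1}$ through $\mathcal Z$. *)

From HB Require Import structures.
From mathcomp Require Import all_boot all_order all_algebra fingroup perm.
From mathcomp Require Import all_classical all_reals all_analysis.
Set Implicit Arguments.
Unset Strict Implicit.
Unset Printing Implicit Defensive.
Import Order.TTheory GRing.Theory Num.Theory.
Local Open Scope classical_set_scope.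
Local Open Scope ring_scope.

Definition coord_preimages (I : Type) d (T : measurableType d) :
  set (set (I -> T)) :=
  [set C | exists i, exists2 A, measurable A & C = (fun f => f i) @^-1` A].

Definition prodfun (I : Type) d (T : measurableType d) :=
  g_sigma_algebraType (@coord_preimages I d T).

(* R^p with its (product = Borel) sigma-algebra. *)
Definition Rpow (R : realType) (p : nat) := prodfun 'I_p R.

(* rule; taking some A i = setT gives the rule for every subfamily).       *)
Definition mutually_independent d dT (Omega : measurableType d)
  (T : measurableType dT) (R : realType) (P : probability Omega R) (m : nat)
  (Z : 'I_m -> Omega -> T) : Prop :=
  forall A : 'I_m -> set T, (forall i, measurable (A i)) ->
    P (\bigcap_(i in [set: 'I_m]) (Z i @^-1` A i)) =
    (\prod_(i < m) P (Z i @^-1` A i))%E.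

Definition iid_from d dT (Omega : measurableType d)
  (T : measurableType dT) (R : realType) (P : probability Omega R) (m : nat)
  (Z : 'I_m -> Omega -> T) (PXY : probability T R) : Prop :=
  [/\ forall i, measurable_fun setT (Z i),
      forall i A, measurable A -> P (Z i @^-1` A) = PXY A
    & mutually_independent P Z].

(* Level-a quantile of the discrete distribution sum_j w j delta_(v j) on   *)
(* R \cup {+oo}:  Q(a; F) = inf { t : F(T <= t) >= a }.                    *)
Definition quantile (R : realType) (m : nat) (a : R) (w : 'I_m -> R)
  (v : 'I_m -> \bar R) : \bar R :=
  ereal_inf [set t : \bar R | a <= \sum_(j < m | (v j <= t)%E) w j].

Section LCP.
Variables (R : realType) (p n : nat).
Definition dataT := (Rpow R p * R)%type.
(* a realization (Z_1, ..., Z_{n+1}); index n+1 of the paper is ord_max *)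
Definition sampleT := 'I_n.+1 -> dataT.
Definition featT := 'I_n.+1 -> Rpow R p.

(* score functions depending on the data only through the unordered set   *)
Definition symmetric_score (V : sampleT -> dataT -> R) : Prop :=
  forall (s : {perm 'I_n.+1}) (z : sampleT) (t : dataT), V (z \o s) t = V z t.
(* localizers depending on the data only through the unordered features   *)
Definition localizer (H : featT -> Rpow R p -> Rpow R p -> R) : Prop :=
  [/\ forall (s : {perm 'I_n.+1}) (xs : featT) x x', H (xs \o s) x x' = H xs x x',
      forall xs x x', 0 <= H xs x x' <= 1
    & forall xs x, H xs x x = 1].

Variables (V : sampleT -> dataT -> R) (H : featT -> Rpow R p -> Rpow R p -> R).
Variable (alpha : R).

Definition feats (z : sampleT) : featT := fun i => (z i).1.
Definition Vs (z : sampleT) (i : 'I_n.+1) : R := V z (z i).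
Definition Hm (z : sampleT) (i j : 'I_n.+1) : R :=
  H (feats z) (feats z i) (feats z j).
Definition pH (z : sampleT) (i j : 'I_n.+1) : R :=
  Hm z i j / \sum_(k < n.+1) Hm z i k.

Definition Q_i (z : sampleT) (a : R) (i : 'I_n.+1) : \bar R :=
  quantile a (pH z i) (fun j => (Vs z j)%:E).
Definition Q_hat (z : sampleT) (a : R) : \bar R :=
  quantile a (pH z ord_max)
    (fun j => if j == ord_max then +oo%E else (Vs z j)%:E).

Definition Gamma (z : sampleT) : set R :=
  [set g | exists i : 'I_n.+1, exists I : {set 'I_n.+1},
           g = \sum_(k in I) pH z i k].

Definition coverage_ok (z : sampleT) (a : R) : Prop :=
  alpha <= (n.+1%:R)^-1 *
           \sum_(i < n.+1) (((Vs z i)%:E <= Q_i z a i)%E : nat)%:R.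

Definition alpha_tilde (z : sampleT) : R :=
  inf [set g | Gamma z g /\ coverage_ok z g].
End LCP.

From HB Require Import structures.
From mathcomp Require Import all_boot all_order all_algebra fingroup perm.
From mathcomp Require Import all_classical all_reals all_analysis.
From mathcomp Require Import measurable_realfun.
Import Order.TTheory GRing.Theory Num.Theory.
Local Open Scope classical_set_scope.
Local Open Scope ring_scope.

(* Let E_i be the event V_i <= Q(α̃; F̂_i).  A score lies below the level-a
   quantile of F̂_i exactly when the p^H_i-mass of the scores strictly below
   it is < a, and V, H, hence p^H, Γ and α̃, see the sample only as a set, so
   permuting the sample permutes the events E_i.  An i.i.d. sample is
   exchangeable, hence all E_i have the same probability.  Γ is finite and
   contains 1, which satisfies the coverage condition since α <= 1, so α̃ is
   attained: at every outcome at least (n+1)α of the E_i occur, and taking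
   expectations gives (n+1) P(E_{n+1}) >= (n+1)α.  The point mass at +oo in F̂
   is never strictly below V_{n+1}, so Q(α̃; F̂) defines the same event. *)

Section quantile.
Context (R : realType) (m : nat) (a : R) (w : 'I_m -> R) (v : 'I_m -> \bar R).
Hypothesis w_ge0 : forall j, 0 <= w j.

Lemma lee_quantile (x : R) :
  (x%:E <= quantile a w v)%E = (\sum_(j < m | (v j < x%:E)%E) w j < a).
Proof.
apply/idP/idP => [x_le_q|mass_lt].
- rewrite ltNge; apply/negP => mass_ge.
  pose t := \big[Order.max/-oo%E]_(j < m | (v j < x%:E)%E) v j.
  have t_lt_x : (t < x%:E)%E.
    by rewrite /t; elim/big_ind: _ => // [|y z]; [exact: ltNyr|rewrite gt_max => ->].
  have q_le_t : (quantile a w v <= t)%E.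
    apply: ereal_inf_lbound; rewrite /= (le_trans mass_ge) // le_eqVlt; apply/orP; left.
    apply/eqP/eq_bigl => j; apply/idP/idP => vj; last exact: le_lt_trans t_lt_x.
    by rewrite /t (bigD1 j) //= le_max lexx.
  by have := le_lt_trans (le_trans x_le_q q_le_t) t_lt_x; rewrite ltxx.
- apply/ereal_infP => t /= mass_t; rewrite leNgt; apply/negP => t_lt_x.
  suff : \sum_(j < m | (v j <= t)%E) w j <= \sum_(j < m | (v j < x%:E)%E) w j.
    by move/(le_trans mass_t)/(lt_le_trans mass_lt); rewrite ltxx.
  rewrite [leLHS]big_mkcond [leRHS]big_mkcond /=; apply: ler_sum => j _.
  case: ifP => [vj|_]; last by case: ifP.
  by rewrite (le_lt_trans vj t_lt_x).
Qed.

End quantile.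

Section product_sigma_algebra.
Context {I : Type} {d} {T : measurableType d}.
Local Notation PT := (prodfun I T).

Lemma measurable_coord_preimage i (A : set T) :
  measurable A -> measurable ((fun z : PT => z i) @^-1` A).
Proof. by move=> mA; apply: sub_sigma_algebra; exists i, A. Qed.

Lemma measurable_fun_coord i : measurable_fun setT (fun z : PT => z i).
Proof. by move=> _ A mA; rewrite setTI; exact: measurable_coord_preimage. Qed.

Lemma measurable_fun_prodfun d' (Omega : measurableType d') (f : Omega -> PT) :
  (forall i, measurable_fun setT (fun w => f w i)) -> measurable_fun setT f.
Proof.
move=> mf; apply: (@measurability _ _ Omega PT setT f (@coord_preimages I d T)) => //.
by move=> _ [_ [i [A mA ->]] <-]; exact: mf.
Qed.

End product_sigma_algebra.

Section boxes.
Context {I : finType} {d} {T : measurableType d}.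

Definition box (A : I -> set T) : set (prodfun I T) := [set z | forall i, A i (z i)].

Definition measurable_boxes : set (set (prodfun I T)) :=
  [set box A | A in [set A | forall i, measurable (A i)]].

Lemma boxE A : box A = \bigcap_(i in [set: I]) ((fun z : prodfun I T => z i) @^-1` A i).
Proof. by apply/seteqP; split => z /= Az i; [move=> _|]; exact: Az. Qed.

Lemma measurable_box A : (forall i, measurable (A i)) -> measurable (box A).
Proof.
move=> mA; rewrite boxE; apply: fin_bigcap_measurable; first exact: finite_finset.
by move=> i _; exact: measurable_coord_preimage.
Qed.

Lemma prodfun_measurable_boxes : @measurable _ (prodfun I T) = <<s measurable_boxes >>.
Proof.
apply/seteqP; split; apply: smallest_sub.
- exact: smallest_sigma_algebra.
- move=> _ [i [A mA ->]]; apply: sub_sigma_algebra.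
  exists (fun j => if j == i then A else setT); first by move=> j /=; case: ifP.
  apply/seteqP; split => z /=; first by move=> /(_ i); rewrite eqxx.
  by move=> Azi j; case: eqP => // ->.
- exact: sigma_algebra_measurable.
- by move=> _ [A mA <-]; exact: measurable_box.
Qed.

Lemma setI_closed_measurable_boxes : setI_closed measurable_boxes.
Proof.
move=> _ _ [A mA <-] [B mB <-]; exists (fun i => A i `&` B i).
  by move=> i; exact: measurableI.
by apply/seteqP; split => z /=; [move=> h; split => i; case: (h i)|move=> [] ? ? i; split].
Qed.

Lemma measurable_boxes_setT : measurable_boxes setT.
Proof. by exists (fun=> setT) => //; apply/seteqP; split. Qed.

End boxes.

Section equal_laws.
Context {d} {Omega : measurableType d} {R : realType} (P : probability Omega R)
  {d'} {T : measurableType d'} {f g : Omega -> T}.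
Hypotheses (mf : measurable_fun setT f) (mg : measurable_fun setT g).

Lemma eq_probability_preimage (G : set (set T)) :
  measurable = <<s G >> -> setI_closed G -> G setT ->
  (forall A, G A -> P (f @^-1` A) = P (g @^-1` A)) ->
  forall A, measurable A -> P (f @^-1` A) = P (g @^-1` A).
Proof.
move=> mG GI GT fg.
pose Pf := distribution P (mfun_Sub (mem_set mf)).
pose Pg := distribution P (mfun_Sub (mem_set mg)).
apply: (measure_unique G (fun=> setT) mG GI (fun=> GT) _ Pf Pg fg).
- by rewrite bigcup_const.
- move=> _; change (P (f @^-1` setT) < +oo)%E.
  by rewrite preimage_setT probability_setT ltry.
Qed.

End equal_laws.

Section iid_exchangeable.
Context {d} {Omega : measurableType d} {R : realType} {P : probability Omega R}
  {dT} {T : measurableType dT} {m : nat} {Z : 'I_m -> Omega -> T} {PXY : probability T R}.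
Hypothesis iidZ : iid_from P Z PXY.

Lemma iid_exchangeable (s : {perm 'I_m}) (B : set (prodfun 'I_m T)) : measurable B ->
  P ((fun w => (fun i => Z i w) : prodfun 'I_m T) @^-1` B) =
  P ((fun w => (fun i => Z (s i) w) : prodfun 'I_m T) @^-1` B).
Proof.
move=> mB; case: iidZ => mZ PZ indep.
have mZs (t : 'I_m -> 'I_m) :
    measurable_fun setT (fun w => (fun i => Z (t i) w) : prodfun 'I_m T).
  by apply: measurable_fun_prodfun => i; exact: mZ.
apply: (eq_probability_preimage P (mZs id) (mZs s) _
  prodfun_measurable_boxes setI_closed_measurable_boxes
  measurable_boxes_setT _ _ mB).
move=> _ [A mA <-]; rewrite !boxE !preimage_bigcap.
have -> : \bigcap_(i in [set: 'I_m]) ((fun w => Z (s i) w) @^-1` A i) =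
          \bigcap_(i in [set: 'I_m]) (Z i @^-1` A ((s^-1)%g i)).
  apply/seteqP; split => w /= Aw i _; last by have := Aw (s i) I; rewrite permK.
  by have := Aw ((s^-1)%g i) I; rewrite permKV.
rewrite !indep //.
under eq_bigr do rewrite PZ //.
under [RHS]eq_bigr do rewrite PZ //.
by rewrite [RHS](reindex_inj (@perm_inj _ s)); apply: eq_bigr => i _; rewrite permK.
Qed.

End iid_exchangeable.

Section equiprobable_events.
Context {d} {Omega : measurableType d} {R : realType} (P : probability Omega R)
  {m : nat} {E : 'I_m.+1 -> set Omega}.
Hypothesis mE : forall i, measurable (E i).

Lemma le_sum_probability (c : R) : 0 <= c ->
  (forall w, c <= \sum_(i < m.+1) \1_(E i) w) ->
  (c%:E <= \sum_(i < m.+1) P (E i))%E.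
Proof.
move=> c_ge0 c_le.
have mI i : measurable_fun setT (EFin \o (\1_(E i) : Omega -> R)).
  exact/measurable_EFinP/measurable_indic.
have I_ge0 i w : setT w -> (0 <= ((\1_(E i) w : R))%:E)%E by rewrite lee_fin.
have -> : (\sum_(i < m.+1) P (E i) = \int[P]_w (\sum_(i < m.+1) (\1_(E i) w)%:E))%E.
  rewrite (ge0_integral_sum _ measurableT mI I_ge0).
  by apply: eq_bigr => i _; rewrite integral_indic // setIT.
have -> : c%:E = (\int[P]_w (cst c%:E w))%E.
  by rewrite integral_cst // -[LHS]mule1; congr (_ * _)%E; exact/esym/probability_setT.
apply: ge0_le_integral => //.
- by apply: emeasurable_sum => i; exact: mI.
- by move=> w _; rewrite sumEFin lee_fin.
Qed.

Lemma le_probability_of_count (j : 'I_m.+1) (c : R) : 0 <= c ->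
  (forall i, P (E i) = P (E j)) ->
  (forall w, m.+1%:R * c <= \sum_(i < m.+1) \1_(E i) w) ->
  (c%:E <= P (E j))%E.
Proof.
move=> c_ge0 PE /(@le_sum_probability _ (mulr_ge0 (ler0n _ _) c_ge0)).
under eq_bigr do rewrite PE.
have : P (E j) \is a fin_num by rewrite fin_num_measure.
move=> /fineK <-; rewrite sumEFin sumr_const card_ord -[fine _ *+ _]mulr_natl.
by rewrite !lee_fin ler_pM2l // ltr0n.
Qed.

End equiprobable_events.

Section measurable_real_functions.
Context {d} {T : measurableType d} {R : realType}.

Lemma measurable_bigmin (I : Type) (s : seq I) (x0 : R) (h : I -> T -> R) :
  (forall i, measurable_fun setT (h i)) ->
  measurable_fun setT (fun z => \big[Order.min/x0]_(i <- s) h i z).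
Proof.
move=> mh; elim: s => [|i s IH].
  have -> : (fun z => \big[Order.min/x0]_(j <- [::]) h j z) = cst x0.
    by apply/funext => z; rewrite big_nil.
  exact: measurable_cst.
have -> : (fun z => \big[Order.min/x0]_(j <- i :: s) h j z) =
          (fun z => Order.min (h i z) (\big[Order.min/x0]_(j <- s) h j z)).
  by apply/funext => z; rewrite big_cons.
exact: measurable_minr.
Qed.

Lemma measurable_fun_inv_ge1 (f : T -> R) :
  measurable_fun setT f -> (forall x, 1 <= f x) ->
  measurable_fun setT (fun x => (f x)^-1).
Proof.
move=> mf f_ge1.
have max1_gt0 (y : R) : 0 < Order.max y 1.
  by rewrite (lt_le_trans ltr01) // le_max lexx orbT.
have -> : (fun x => (f x)^-1) = (fun y => (Order.max y 1)^-1) \o f.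
  by apply/funext => x /=; rewrite max_l.
apply: measurableT_comp mf; apply: nonincreasing_measurable => // y y' yy'.
by rewrite lef_pV2 ?posrE // ge_max !le_max yy' lexx !orbT.
Qed.

End measurable_real_functions.

Section localized_conformal.
Context {R : realType} {p n : nat} (V : sampleT R p n -> dataT R p -> R)
  (H : featT R p n -> Rpow R p -> Rpow R p -> R) (alpha : R).
Hypotheses (symV : symmetric_score V) (locH : localizer H).
Implicit Types (z : sampleT R p n) (s : {perm 'I_n.+1}) (a : R).

Lemma Hm_ge0 z i j : 0 <= Hm H z i j.
Proof. by case: locH => _ H01 _; case/andP: (H01 (feats z) (feats z i) (feats z j)). Qed.

Lemma Hm_diag z i : Hm H z i i = 1.
Proof. by case: locH => _ _ H1; exact: H1. Qed.

Lemma sum_Hm_ge1 z i : 1 <= \sum_(k < n.+1) Hm H z i k.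
Proof. by rewrite (bigD1 i) //= Hm_diag lerDl sumr_ge0 // => k _; exact: Hm_ge0. Qed.

Lemma sum_Hm_gt0 z i : 0 < \sum_(k < n.+1) Hm H z i k.
Proof. exact: lt_le_trans ltr01 (sum_Hm_ge1 z i). Qed.

Lemma pH_ge0 z i j : 0 <= pH H z i j.
Proof. by rewrite /pH divr_ge0 ?Hm_ge0 // ltW // sum_Hm_gt0. Qed.

Lemma pH_diag_gt0 z i : 0 < pH H z i i.
Proof. by rewrite /pH Hm_diag divr_gt0 // sum_Hm_gt0. Qed.

Lemma sum_pH z i : \sum_(k < n.+1) pH H z i k = 1.
Proof. by rewrite /pH -mulr_suml mulfV // gt_eqF // sum_Hm_gt0. Qed.

Definition mass_below z i := \sum_(j < n.+1 | Vs V z j < Vs V z i) pH H z i j.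

Lemma mass_below_lt1 z i : mass_below z i < 1.
Proof.
rewrite -(sum_pH z i) (bigID (fun j => Vs V z j < Vs V z i)) /= ltrDl.
rewrite (bigD1 i) ?ltxx //=; apply: lt_le_trans (pH_diag_gt0 z i) _.
by rewrite lerDl sumr_ge0 // => j _; exact: pH_ge0.
Qed.

Lemma lee_Q_i z a i :
  ((Vs V z i)%:E <= Q_i V H z a i)%E = (mass_below z i < a).
Proof.
rewrite /Q_i lee_quantile; last exact: pH_ge0.
by congr (_ < _); apply: eq_bigl => j; rewrite lte_fin.
Qed.

Lemma lee_Q_hat z a :
  ((Vs V z ord_max)%:E <= Q_hat V H z a)%E = (mass_below z ord_max < a).
Proof.
rewrite /Q_hat lee_quantile; last exact: pH_ge0.
congr (_ < _); apply: eq_bigl => j.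
by case: eqP => [->|_]; rewrite ?ltxx ?ltNge ?leey // lte_fin.
Qed.

Definition coverageb z a :=
  alpha <= n.+1%:R^-1 * \sum_(i < n.+1) ((mass_below z i < a)%R : nat)%:R.

Lemma coverage_okE z a : coverage_ok V H alpha z a = coverageb z a.
Proof. by rewrite /coverage_ok; under eq_bigr do rewrite lee_Q_i. Qed.

Hypothesis alpha_le1 : alpha <= 1.

Lemma coverageb1 z : coverageb z 1.
Proof.
rewrite /coverageb; under eq_bigr do rewrite mass_below_lt1.
by rewrite sumr_const card_ord mulr1n mulVf ?pnatr_eq0.
Qed.

Lemma Vs_perm s z i : Vs V (z \o s) i = Vs V z (s i).
Proof. by rewrite /Vs symV. Qed.

Lemma Hm_perm s z i j : Hm H (z \o s) i j = Hm H z (s i) (s j).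
Proof. by case: locH => Hsym _ _; exact: Hsym. Qed.

Lemma pH_perm s z i j : pH H (z \o s) i j = pH H z (s i) (s j).
Proof.
rewrite /pH Hm_perm; congr (_ / _).
by rewrite [RHS](reindex_inj (@perm_inj _ s)); apply: eq_bigr => k _; exact: Hm_perm.
Qed.

Lemma mass_below_perm s z i : mass_below (z \o s) i = mass_below z (s i).
Proof.
rewrite /mass_below [RHS](reindex_inj (@perm_inj _ s)).
by apply: eq_big => [j|j _]; rewrite ?Vs_perm ?pH_perm.
Qed.

Lemma coverageb_perm s z a : coverageb (z \o s) a = coverageb z a.
Proof.
rewrite /coverageb; under eq_bigr do rewrite mass_below_perm.
by rewrite [in RHS](reindex_inj (@perm_inj _ s)).
Qed.

Lemma Gamma_perm_sub s z : Gamma H z `<=` Gamma H (z \o s).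
Proof.
move=> _ [i [I ->]]; exists ((s^-1)%g i), [set k | s k \in I]%SET.
under [RHS]eq_bigr do rewrite pH_perm permKV.
by rewrite (reindex_inj (@perm_inj _ s)); apply: eq_bigl => k; rewrite inE.
Qed.

Lemma Gamma_perm s z : Gamma H (z \o s) = Gamma H z.
Proof.
apply/seteqP; split; last exact: Gamma_perm_sub.
have zsK : (z \o s) \o (s^-1)%g = z by apply/funext => i /=; rewrite permKV.
by rewrite -{2}zsK; exact: Gamma_perm_sub.
Qed.

Lemma alpha_tilde_perm s z :
  alpha_tilde V H alpha (z \o s) = alpha_tilde V H alpha z.
Proof.
rewrite /alpha_tilde Gamma_perm; congr inf; apply/funext => g.
by rewrite /= !coverage_okE coverageb_perm.
Qed.

Definition gamma z (c : 'I_n.+1 * {set 'I_n.+1}) := \sum_(k in c.2) pH H z c.1 k.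

(* The finite minimum behind the infimum defining α̃; it makes α̃ measurable. *)
Definition alpha_min z := \big[Order.min/1]_(c | coverageb z (gamma z c)) gamma z c.

Lemma alpha_min_admissible z :
  Gamma H z (alpha_min z) /\ coverageb z (alpha_min z).
Proof.
have Gamma1 : Gamma H z 1.
  exists ord0, [set: 'I_n.+1]%SET; rewrite -(sum_pH z ord0).
  by apply: eq_bigl => k; rewrite inE.
rewrite /alpha_min; elim/big_ind: _ => [|x y hx hy|c cov_c].
- by split; [exact: Gamma1|exact: coverageb1].
- by rewrite /Order.min; case: ifP.
- by split => //; exists c.1, c.2.
Qed.

Lemma alpha_min_le z g : Gamma H z g -> coverageb z g -> alpha_min z <= g.
Proof.
by move=> [i [I ->]] cov; rewrite -[leRHS]/(gamma z (i, I)); exact: bigmin_le_cond.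
Qed.

Lemma alpha_tildeE z : alpha_tilde V H alpha z = alpha_min z.
Proof.
have [Gmin cov_min] := alpha_min_admissible z.
have min_in : [set g | Gamma H z g /\ coverage_ok V H alpha z g] (alpha_min z).
  by split; rewrite ?coverage_okE.
have min_lb : lbound [set g | Gamma H z g /\ coverage_ok V H alpha z g] (alpha_min z).
  by move=> g [Gg]; rewrite coverage_okE; exact: alpha_min_le.
apply/eqP; rewrite eq_le lb_le_inf ?andbT; last exact: min_lb.
- by apply: ge_inf; [exists (alpha_min z)|].
- by exists (alpha_min z).
Qed.

Definition covers z i := ((Vs V z i)%:E <= Q_i V H z (alpha_tilde V H alpha z) i)%E.

Lemma coversE z i : covers z i = (mass_below z i < alpha_min z).
Proof. by rewrite /covers lee_Q_i alpha_tildeE. Qed.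

Lemma covers_perm s z i : covers (z \o s) i = covers z (s i).
Proof. by rewrite /covers alpha_tilde_perm !lee_Q_i mass_below_perm. Qed.

Lemma count_covers z : n.+1%:R * alpha <= \sum_(i < n.+1) (covers z i)%:R.
Proof.
under eq_bigr do rewrite coversE.
by rewrite -ler_pdivlMl ?ltr0n //; case: (alpha_min_admissible z).
Qed.

Hypothesis mV : measurable_fun setT
  (fun zt : (prodfun 'I_n.+1 (dataT R p) * dataT R p)%type => V zt.1 zt.2).
Hypothesis mH : measurable_fun setT
  (fun xs : (prodfun 'I_n.+1 (Rpow R p) * (Rpow R p * Rpow R p))%type =>
     H xs.1 xs.2.1 xs.2.2).

Local Notation sample := (prodfun 'I_n.+1 (dataT R p)).

Lemma measurable_Vs i : measurable_fun setT (fun z : sample => Vs V z i).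
Proof.
exact: (measurableT_comp mV
  (measurable_fun_pair (@measurable_id _ sample setT) (measurable_fun_coord i))).
Qed.

Lemma measurable_feat i : measurable_fun setT (fun z : sample => feats z i).
Proof. exact: measurableT_comp measurable_fst (measurable_fun_coord i). Qed.

Lemma measurable_Hm i j : measurable_fun setT (fun z : sample => Hm H z i j).
Proof.
apply: measurableT_comp mH (measurable_fun_pair _ (measurable_fun_pair _ _)).
- by apply: measurable_fun_prodfun => k; exact: measurable_feat.
- exact: measurable_feat.
- exact: measurable_feat.
Qed.

Lemma measurable_pH i j : measurable_fun setT (fun z : sample => pH H z i j).
Proof.
apply: measurable_funM; first exact: measurable_Hm.
apply: measurable_fun_inv_ge1 => [|z]; last exact: sum_Hm_ge1.
by apply: measurable_sum => k; exact: measurable_Hm.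
Qed.

Lemma measurable_mass_below i : measurable_fun setT (fun z : sample => mass_below z i).
Proof.
have -> : (fun z : sample => mass_below z i) = fun z =>
    \sum_(j < n.+1) if Vs V z j < Vs V z i then pH H z i j else 0.
  by apply/funext => z; rewrite /mass_below big_mkcond.
apply: measurable_sum => j; apply: measurable_fun_ifT; last exact: measurable_cst.
- exact: measurable_fun_ltr (measurable_Vs j) (measurable_Vs i).
- exact: measurable_pH.
Qed.

Lemma measurable_coverageb (g : sample -> R) :
  measurable_fun setT g -> measurable_fun setT (fun z : sample => coverageb z (g z)).
Proof.
move=> mg; apply: measurable_fun_ler => //; apply: measurable_funM => //.
apply: measurable_sum => i.
have -> : (fun z : sample => ((mass_below z i < g z)%R : nat)%:R) =
          (fun z => if mass_below z i < g z then 1 else 0 : R).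
  by apply/funext => z; case: ltP.
apply: measurable_fun_ifT => //.
exact: measurable_fun_ltr (measurable_mass_below i) mg.
Qed.

Lemma measurable_alpha_min : measurable_fun setT (fun z : sample => alpha_min z).
Proof.
have -> : (fun z : sample => alpha_min z) = fun z =>
    \big[Order.min/1]_c (if coverageb z (gamma z c) then gamma z c else 1).
  by apply/funext => z; rewrite /alpha_min bigmin_mkcond.
apply: measurable_bigmin => c.
have mgamma : measurable_fun setT (fun z : sample => gamma z c).
  have -> : (fun z : sample => gamma z c) = fun z =>
      \sum_(k < n.+1) if k \in c.2 then pH H z c.1 k else 0.
    by apply/funext => z; rewrite /gamma big_mkcond.
  by apply: measurable_sum => k; case: (k \in c.2) => //; exact: measurable_pH.
by apply: measurable_fun_ifT => //; exact: measurable_coverageb.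
Qed.

Lemma measurable_covers i : measurable [set z : sample | covers z i].
Proof.
rewrite (_ : [set z | _] =
  setT `&` (fun z => mass_below z i < alpha_min z) @^-1` [set true]).
  exact: measurable_fun_ltr (measurable_mass_below i) measurable_alpha_min measurableT _ _.
by apply/seteqP; split => z; rewrite /= coversE => // -[].
Qed.

Section iid_sample.
Context {d} {Omega : measurableType d} {P : probability Omega R}
  {PXY : probability (dataT R p) R} {Z : 'I_n.+1 -> Omega -> dataT R p}.
Hypothesis iidZ : iid_from P Z PXY.

Let covered i := [set w | covers (fun j => Z j w) i].

Lemma measurable_covered i : measurable (covered i).
Proof.
have mZs : measurable_fun setT (fun w => (fun j => Z j w) : sample).
  by apply: measurable_fun_prodfun => j; case: iidZ => mZ _ _; exact: mZ.
rewrite -[covered i]setTI; apply: (mZs measurableT [set z | covers z i]).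
exact: measurable_covers.
Qed.

Lemma probability_covered_perm i : P (covered i) = P (covered ord_max).
Proof.
have -> : covered i = [set w | covers ((fun j => Z j w) \o tperm ord_max i) ord_max].
  by apply/funext => w; rewrite /covered /= covers_perm tpermL.
exact: (esym (iid_exchangeable iidZ (tperm ord_max i) _ (measurable_covers ord_max))).
Qed.

Lemma probability_covered_ge : 0 <= alpha -> (alpha%:E <= P (covered ord_max))%E.
Proof.
move=> alpha_ge0; apply: (le_probability_of_count P measurable_covered) => //.
  exact: probability_covered_perm.
move=> w; under eq_bigr do rewrite indicE mem_setE.
exact: count_covers.
Qed.

End iid_sample.

End localized_conformal.

Theorem theorem1 (R : realType) (p n : nat) (d : measure_display)
  (Omega : measurableType d) (P : probability Omega R)
  (PXY : probability (dataT R p) R)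
  (Z : 'I_n.+1 -> Omega -> dataT R p)
  (V : sampleT R p n -> dataT R p -> R)
  (H : featT R p n -> Rpow R p -> Rpow R p -> R)
  (alpha : R) :
  iid_from P Z PXY ->
  symmetric_score V ->
  measurable_fun setT
    (fun zt : (prodfun 'I_n.+1 (dataT R p) * dataT R p)%type => V zt.1 zt.2) ->
  localizer H ->
  measurable_fun setT
    (fun xs : (prodfun 'I_n.+1 (Rpow R p) * (Rpow R p * Rpow R p))%type =>
       H xs.1 xs.2.1 xs.2.2) ->
  0 < alpha < 1 ->
  let Zs := fun w : Omega => (fun i => Z i w) : sampleT R p n in
  (alpha%:E <= P [set w | ((Vs V (Zs w) ord_max)%:E <=
        Q_i V H (Zs w) (alpha_tilde V H alpha (Zs w)) ord_max)%E])%E /\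
  (alpha%:E <= P [set w | ((Vs V (Zs w) ord_max)%:E <=
        Q_hat V H (Zs w) (alpha_tilde V H alpha (Zs w)))%E])%E.
Proof.
move=> iidZ symV mV locH mH /andP[/ltW alpha_ge0 /ltW alpha_le1] Zs.
have cover := probability_covered_ge V H alpha symV locH alpha_le1 mV mH iidZ alpha_ge0.
split; first exact: cover.
rewrite (_ : [set w | _] = [set w | covers V H alpha (Zs w) ord_max]) //.
by apply/funext => w; rewrite /covers /= (lee_Q_hat V H locH) (lee_Q_i V H locH).
Qed.
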